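(* Let $k$ be a positive integer with $k\equiv 3\pmod 4$, and let $\mathrm{SG}(n)$ denote the Sprague--Grundy value of a pile of $n$ tokens in the game $i\textsc{-Mark}(\{2\},\{k\})$. Let $b=2k$, $c_0=4k$, and $c_m=k(c_{m-1}+2)$ for $m\ge 1$. Let $I_0=[0,b-1]$, $I_1=[b+1,c_0-1]$, and $I_m=[c_{m-2}+1,c_{m-1}-1]$ for $m\ge 2$ (integer intervals). Then: (1) $\mathrm{SG}(b)=2$ and $\mathrm{SG}(c_m)=2$ for all $m\ge 0$; (2) the sequence of SG values of the elements of $I_0$, in increasing order, is $(0,0,1,1)^{z_0},0,0$ with $z_0=(b-2)/4$; (3) for $m$ odd, the sequence of SG values of the elements of $I_m$ is $(1,0,0,1)^{z_m},1$, where $z_1=(c_0-b-2)/4$ and $z_m=(c_{m-1}-c_{m-2}-2)/4$ for $m\ge 3$; (4) for $m\ge 2$ even, the sequence of SG values of the elements of $I_m$ is $(0,0,1,1)^{z_m},0$ with $z_m=(c_{m-1}-c_{m-2}-2)/4$. Here $X^z$ denotes the $z$-fold concatenation of the finite sequence $X$.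
   Context: For a nonempty set $S$ of positive integers and a nonempty set $D$ of integers larger than $1$, the impartial game $i\textsc{-Mark}(S,D)$ is played on a single pile of $n\ge 0$ tokens: a move either replaces $n$ by $n-s$ for some $s\in S$ with $s\le n$, or replaces $n$ by $n/d$ for some $d\in D$ dividing $n$ (with $n>0$). The Sprague--Grundy value is defined recursively by $\mathrm{SG}(n)=\mathrm{mex}\{\mathrm{SG}(w): w \text{ an option of } n\}$, where $\mathrm{mex}(T)$ is the smallest nonnegative integer not in $T$. *)

From mathcomp Require Import all_boot.
Set Implicit Arguments. Unset Strict Implicit. Unset Printing Implicit Defensive.

(* Game i-Mark(S,D) with S, D given as finite lists (the statement uses
   S = [:: 2], D = [:: k]). *)

Definition mex (s : seq nat) : nat :=
  find (fun m => m \notin s) (iota 0 (size s).+1).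

Definition options (S D : seq nat) (n : nat) : seq nat :=
  [seq n - s | s <- S & (0 < s) && (s <= n)] ++
  [seq n %/ d | d <- D & (1 < d) && (d %| n) && (0 < n)].

(* Sprague-Grundy value; every option is strictly smaller than n (s > 0, d > 1),
   so fuel n.+1 suffices. *)
Fixpoint sg_aux (S D : seq nat) (fuel n : nat) : nat :=
  match fuel with
  | 0 => 0
  | f.+1 => mex [seq sg_aux S D f w | w <- options S D n]
  end.

Definition SG (S D : seq nat) (n : nat) : nat := sg_aux S D n.+1 n.

Fixpoint cseq (k m : nat) : nat :=
  match m with
  | 0 => 4 * k
  | m'.+1 => k * (cseq k m' + 2)
  end.

Definition sg_on (k lo hi : nat) : seq nat :=
  [seq SG [:: 2] [:: k] n | n <- iota lo (hi.+1 - lo)].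

Definition rep (z : nat) (X : seq nat) : seq nat := flatten (nseq z X).

From mathcomp Require Import all_boot zify.

(* Below 2k the division move is available only at n = k, and the game is the
   subtraction game {2}, with SG value n/2 mod 2 ([sub2_sg]).  At each of the
   marks 2k, c_0, c_1, ... both moves are available and reach the values 0 and
   1, so the value is 2; between two consecutive marks the subtraction move
   makes the values run through 0,0,1,1 with period 4, in a phase fixed by the
   residue of the mark mod 4 ([gap_sg]).  The division move never breaks this
   pattern: as k = 3 (mod 4), q k = -q (mod 4), so the value predicted at q k in
   the gap after a mark is the complement of the value at q in the previous gap
   ([gap_sgS_mul]), and n/k always lies below 2k, in that previous gap, on a
   mark, or just after one. *)

Lemma options_lt S D n w : w \in options S D n -> w < n.
Proof.
rewrite mem_cat => /orP[] /mapP[x]; rewrite mem_filter.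
  by case/andP=> /andP[x_gt0 x_le_n] _ ->; lia.
by case/andP=> /andP[/andP[x_gt1 _] n_gt0] _ ->; apply: ltn_Pdiv.
Qed.

Lemma sg_aux_fuel S D f1 f2 n :
  n < f1 -> n < f2 -> sg_aux S D f1 n = sg_aux S D f2 n.
Proof.
elim: f1 f2 n => [|f1 IH] [|f2] n //= lt_n_f1 lt_n_f2.
by congr mex; apply/eq_in_map => w /options_lt lt_w_n; apply: IH; lia.
Qed.

Lemma SG_rec S D n : SG S D n = mex [seq SG S D w | w <- options S D n].
Proof.
by congr mex; apply/eq_in_map => w /options_lt lt_w_n; apply: sg_aux_fuel.
Qed.

Lemma mex_seq1 a : a <= 1 -> mex [:: a] = 1 - a.
Proof. by case: a => [|[]]. Qed.

Lemma mex_seq2 a b : a <= 1 -> b != 1 - a -> mex [:: a; b] = 1 - a.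
Proof. by case: a => [|[|]] // _; case: b => [|[|]]. Qed.

Lemma mex_seq2_compl a b : a <= 1 -> b = 1 - a -> mex [:: a; b] = 2.
Proof. by case: a => [|[|]] // _ ->. Qed.

Lemma SG_sub2_divE k n : 1 < k ->
  SG [:: 2] [:: k] n = mex
    ((if 2 <= n then [:: SG [:: 2] [:: k] (n - 2)] else [::]) ++
     (if (k %| n) && (0 < n) then [:: SG [:: 2] [:: k] (n %/ k)] else [::])).
Proof.
move=> k_gt1; rewrite SG_rec /options /= k_gt1 /=.
by case: (2 <= n); case: (k %| n); case: (0 < n).
Qed.

Definition mark k j := if j is j'.+1 then cseq k j' else 2 * k.
Arguments mark : simpl never.

Lemma mark0 k : mark k 0 = 2 * k.
Proof. by []. Qed.

Lemma mark1 k : mark k 1 = 4 * k.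
Proof. by []. Qed.

Lemma markSS k j : mark k j.+2 = k * (mark k j.+1 + 2).
Proof. by []. Qed.

Lemma dvdn_mark k j : k %| mark k j.
Proof.
by case: j => [|[|j]]; [apply: dvdn_mull | apply: dvdn_mull | apply: dvdn_mulr].
Qed.

Lemma mark_gap k j : 0 < k -> mark k j + 2 * k <= mark k j.+1.
Proof.
move=> k_gt0; elim: j => [|j IH]; first by rewrite mark0 mark1; lia.
rewrite markSS; nia.
Qed.

Lemma mark_ge k j : 0 < k -> 2 * k <= mark k j.
Proof.
move=> k_gt0; case: j => [|j]; first by rewrite mark0.
by have := mark_gap k j k_gt0; lia.
Qed.

Lemma mark_mod4 k j : k %% 4 = 3 -> mark k j %% 4 = (if odd j then 0 else 2).
Proof.
move=> k_mod4.
elim: j => [|[|j] IH]; [by rewrite mark0 /=; lia | by rewrite mark1 /=; lia |].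
by rewrite markSS -modnMm k_mod4 -modnDml IH /= negbK; case: (odd j).
Qed.

Definition sub2_sg n := n %/ 2 %% 2.

Definition gap_sg j n := sub2_sg (n + 3 * odd j).

Lemma sub2_sg_le1 n : sub2_sg n <= 1.
Proof. rewrite /sub2_sg; lia. Qed.

Lemma gap_sg_le1 j n : gap_sg j n <= 1.
Proof. exact: sub2_sg_le1. Qed.

Lemma sub2_sgSS n : sub2_sg n.+2 = 1 - sub2_sg n.
Proof. rewrite /sub2_sg; lia. Qed.

Lemma gap_sgSS j n : gap_sg j n.+2 = 1 - gap_sg j n.
Proof. by rewrite /gap_sg addSn addSn sub2_sgSS. Qed.

Lemma gap_sgS_mul k j q : k %% 4 = 3 -> gap_sg j.+1 (q * k) = 1 - gap_sg j q.
Proof.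
move=> k_mod4; have kE : k = 4 * (k %/ 4) + 3 by lia.
rewrite /gap_sg /sub2_sg /= kE mulnDr mulnCA; case: (odd j) => /=; lia.
Qed.

Lemma map_iota_periodic (f : nat -> nat) p lo z r :
  (forall n, f (n + p) = f n) ->
  map f (iota lo (p * z + r)) = rep z (map f (iota lo p)) ++ map f (iota lo r).
Proof.
move=> f_per; elim: z lo => [|z IH] lo; first by rewrite muln0.
rewrite mulnS -addnA iotaD map_cat addnC iotaDl -map_comp.
rewrite (eq_map (g := f)) => [|n /=]; last by rewrite addnC f_per.
by rewrite IH catA.
Qed.

Lemma sg_on_eq k f lo hi : (forall n, lo <= n <= hi -> SG [:: 2] [:: k] n = f n) ->
  sg_on k lo hi = map f (iota lo (hi.+1 - lo)).
Proof.
move=> sg_f; apply/eq_in_map => n; rewrite mem_iota => n_in.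
by apply: sg_f; lia.
Qed.

Definition sg_shape k n v : Prop :=
  [/\ n < 2 * k -> v = sub2_sg n,
      forall j, n = mark k j -> v = 2 &
      forall j, mark k j < n < mark k j.+1 -> v = gap_sg j n].

Section Shape.
Variable k : nat.
Hypothesis k_mod4 : k %% 4 = 3.
Local Notation sg := (SG [:: 2] [:: k]).

Let k_ge3 : 3 <= k. Proof. lia. Qed.
Let k_gt0 : 0 < k. Proof. lia. Qed.

Section Step.
Variable n : nat.
Hypothesis IH : forall m, m < n -> sg_shape k m (sg m).

Let sg_below m : m < n -> m < 2 * k -> sg m = sub2_sg m.
Proof. by move=> /IH[]. Qed.

Let sg_mark j : mark k j < n -> sg (mark k j) = 2.
Proof. by move=> /IH[_ + _]; apply. Qed.

Let sg_gap j m : m < n -> mark k j < m < mark k j.+1 -> sg m = gap_sg j m.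
Proof. by move=> /IH[_ _]; apply. Qed.

Lemma shape_below : n < 2 * k -> sg n = sub2_sg n.
Proof.
move=> n_lt; rewrite SG_sub2_divE; last lia.
have [n_lt2|n_ge2] := ltnP n 2.
  case: ifPn => [/andP[k_dvd_n n_gt0]|_]; first by have := dvdn_leq n_gt0 k_dvd_n; lia.
  by rewrite [mex _](_ : _ = 0) // /sub2_sg; lia.
rewrite sg_below; [|lia|lia].
case: (boolP ((k %| n) && (0 < n))) => [/andP[/dvdnP[q nE] n_gt0]|_] /=.
  have q1 : q = 1 by move: n_lt; rewrite nE; nia.
  rewrite nE q1 mul1n divnn k_gt0 sg_below; [|lia|lia].
  rewrite mex_seq2 ?sub2_sg_le1 /sub2_sg; lia.
by rewrite mex_seq1 ?sub2_sg_le1 // -sub2_sgSS; congr sub2_sg; lia.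
Qed.

Lemma shape_mark j : n = mark k j -> sg n = 2.
Proof.
move=> nE; have n_ge := mark_ge k j k_gt0.
rewrite SG_sub2_divE ?ifT /=; [|by rewrite nE dvdn_mark; lia|lia|lia].
case: j nE n_ge => [|[|i]] nE n_ge.
- rewrite mark0 in nE n_ge; rewrite nE mulnK // !sg_below; try lia.
  by apply: mex_seq2_compl; rewrite /sub2_sg; lia.
- rewrite mark1 in nE n_ge; rewrite nE mulnK // (sg_gap 0) ?sg_below;
    rewrite ?mark0 ?mark1; try lia.
  by apply: mex_seq2_compl; rewrite /gap_sg /sub2_sg /=; lia.
- have gap_i := mark_gap k i.+1 k_gt0.
  rewrite nE markSS mulKn // -markSS !(sg_gap i.+1); try lia.
  apply: mex_seq2_compl; first exact: gap_sg_le1.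
  have := mark_mod4 k i.+1 k_mod4; have := mark_mod4 k i.+2 k_mod4.
  by rewrite /gap_sg /sub2_sg /= negbK; case: (odd i) => /=; lia.
Qed.

Lemma sg_subn2_gap j :
  mark k j < n < mark k j.+1 -> n != (mark k j).+2 -> sg (n - 2) = 1 - gap_sg j n.
Proof.
move=> /andP[lo hi] n_ne; have gap_j := mark_gap k j k_gt0.
have [n_le|n_gt] := leqP n (mark k j).+2; last first.
  rewrite (sg_gap j); try lia.
  have nE : n = (n - 2).+2 by lia.
  by rewrite [in RHS]nE gap_sgSS subKn ?gap_sg_le1.
have nE : n = (mark k j).+1 by lia.
case: j nE {lo hi n_ne n_le gap_j} => [|i] nE.
  by rewrite mark0 in nE; rewrite sg_below nE /gap_sg /sub2_sg /=; lia.
have gap_i := mark_gap k i k_gt0; rewrite (sg_gap i); try lia.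
have := mark_mod4 k i.+1 k_mod4.
by rewrite nE /gap_sg /sub2_sg /=; case: (odd i) => /=; lia.
Qed.

Lemma sg_quot_prev_gap i q : q < n -> mark k i.+1 < q * k -> q < mark k i.+1 ->
  sg q = 2 \/ sg q = gap_sg i q.
Proof.
move=> q_lt_n lo hi; case: i lo hi => [|i] lo hi.
  rewrite mark1 in lo hi.
  case: (ltngtP q (2 * k)) => [q_lt|q_gt|qE]; [right|right|left].
  - by rewrite sg_below // /gap_sg addn0.
  - by apply: sg_gap; rewrite // mark0 mark1 q_gt.
  - by rewrite qE -mark0 sg_mark // mark0 -qE.
right; apply: sg_gap; rewrite // hi andbT.
by move: lo; rewrite markSS mulnC ltn_pmul2r //; lia.
Qed.

Lemma sg_divk_gap j :
  mark k j < n < mark k j.+1 -> k %| n -> sg (n %/ k) != gap_sg j n.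
Proof.
move=> /andP[lo hi] /dvdnP[q nE]; rewrite nE mulnK //.
have n_ge := mark_ge k j k_gt0.
have q_gt0 : 0 < q by rewrite lt0n; apply/eqP => q0; move: lo; rewrite nE q0; lia.
have q_lt_n : q < n by rewrite nE ltn_Pmulr //; lia.
case: j lo hi n_ge => [|i] lo hi n_ge.
  rewrite mark0 mark1 nE in lo hi.
  have q_gt2 : 2 < q by rewrite -(ltn_pmul2r k_gt0).
  have q_lt4 : q < 4 by rewrite -(ltn_pmul2r k_gt0).
  have -> : q = 3 by lia.
  by rewrite sg_below /gap_sg /sub2_sg /=; lia.
rewrite nE in lo hi.
have q_le : q <= (mark k i.+1).+1.
  by move: hi; rewrite markSS mulnC ltn_pmul2l //; lia.
case: (ltngtP q (mark k i.+1)) => [q_lt|q_gt|qE].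
- have [->|->] := sg_quot_prev_gap i q q_lt_n lo q_lt.
    by have := gap_sg_le1 i.+1 (q * k); lia.
  by rewrite gap_sgS_mul //; have := gap_sg_le1 i q; lia.
- have gap_i := mark_gap k i.+1 k_gt0.
  rewrite (sg_gap i.+1) ?gap_sgS_mul //; try lia.
  have := mark_mod4 k i.+1 k_mod4; have -> : q = (mark k i.+1).+1 by lia.
  by rewrite /gap_sg /sub2_sg /=; case: (odd i) => /=; lia.
- rewrite qE sg_mark; last lia.
  by have := gap_sg_le1 i.+1 (mark k i.+1 * k); lia.
Qed.

Lemma shape_gap j : mark k j < n < mark k j.+1 -> sg n = gap_sg j n.
Proof.
move=> n_in; have n_ge := mark_ge k j k_gt0.
have n_gt0 : 0 < n by lia.
rewrite SG_sub2_divE; last lia.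
rewrite ifT; last lia.
rewrite n_gt0 andbT.
have [nE|n_ne] := eqVneq n (mark k j).+2.
  have k_ndvd_n : ~~ (k %| n).
    by rewrite nE -addn2 dvdn_addr ?dvdn_mark //; apply/negP => /dvdn_leq; lia.
  rewrite (negbTE k_ndvd_n) (_ : n - 2 = mark k j) ?sg_mark; [|lia|lia].
  have := mark_mod4 k j k_mod4.
  rewrite [mex _](_ : _ = 0) // nE /gap_sg /sub2_sg.
  by case: (odd j) => /=; lia.
rewrite (sg_subn2_gap j) //; case: ifPn => [k_dvd_n|_] /=.
  by rewrite mex_seq2 ?leq_subr // subKn ?gap_sg_le1 ?sg_divk_gap.
by rewrite mex_seq1 ?leq_subr // subKn ?gap_sg_le1.
Qed.

End Step.

Lemma sg_shape_all n : sg_shape k n (sg n).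
Proof.
elim/ltn_ind: n => n IH; split.
- exact: shape_below.
- exact: shape_mark.
- exact: shape_gap.
Qed.

Lemma SG_mark j : sg (mark k j) = 2.
Proof. by case: (sg_shape_all (mark k j)) => _ + _; apply. Qed.

Lemma sg_on_below :
  sg_on k 0 (2 * k - 1) = rep ((2 * k - 2) %/ 4) [:: 0; 0; 1; 1] ++ [:: 0; 0].
Proof.
rewrite (sg_on_eq k sub2_sg) => [|n n_le]; last first.
  by case: (sg_shape_all n) => + _ _; apply; lia.
rewrite (_ : _ - 0 = 4 * ((2 * k - 2) %/ 4) + 2); last lia.
by rewrite map_iota_periodic // => n; rewrite /sub2_sg; lia.
Qed.

Lemma sg_on_gap j :
  sg_on k (mark k j).+1 (mark k j.+1 - 1) =
  rep ((mark k j.+1 - mark k j - 2) %/ 4) (map (gap_sg j) (iota (mark k j).+1 4))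
  ++ [:: gap_sg j (mark k j).+1].
Proof.
have gap_j := mark_gap k j k_gt0.
rewrite (sg_on_eq k (gap_sg j)) => [|n n_in]; last first.
  by case: (sg_shape_all n) => _ _; apply; lia.
rewrite (_ : (mark k j.+1 - 1).+1 - (mark k j).+1 =
             4 * ((mark k j.+1 - mark k j - 2) %/ 4) + 1).
  by rewrite map_iota_periodic // => n; rewrite /gap_sg /sub2_sg; lia.
have := mark_mod4 k j k_mod4; have := mark_mod4 k j.+1 k_mod4.
by rewrite [odd j.+1]/=; case: (odd j) => /=; lia.
Qed.

Lemma sg_on_gap_even j : ~~ odd j ->
  sg_on k (mark k j).+1 (mark k j.+1 - 1) =
  rep ((mark k j.+1 - mark k j - 2) %/ 4) [:: 1; 0; 0; 1] ++ [:: 1].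
Proof.
move=> j_even; have := mark_mod4 k j k_mod4.
rewrite sg_on_gap /gap_sg /sub2_sg (negbTE j_even) /= => mark_j_mod4.
by congr (rep _ [:: _; _; _; _] ++ [:: _]); lia.
Qed.

Lemma sg_on_gap_odd j : odd j ->
  sg_on k (mark k j).+1 (mark k j.+1 - 1) =
  rep ((mark k j.+1 - mark k j - 2) %/ 4) [:: 0; 0; 1; 1] ++ [:: 0].
Proof.
move=> j_odd; have := mark_mod4 k j k_mod4.
rewrite sg_on_gap /gap_sg /sub2_sg j_odd /= => mark_j_mod4.
by congr (rep _ [:: _; _; _; _] ++ [:: _]); lia.
Qed.

End Shape.

Theorem mainTheorem2 (k : nat) (hk : 0 < k) (hk4 : k %% 4 = 3) :
  let sg := SG [:: 2] [:: k] in
  let b := 2 * k in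
  let c := cseq k in
  (* (1) *)
  (sg b = 2 /\ forall m, sg (c m) = 2) /\
  (* (2) I_0 = [0, b-1] *)
  sg_on k 0 (b - 1) = rep ((b - 2) %/ 4) [:: 0; 0; 1; 1] ++ [:: 0; 0] /\
  (* (3) m odd: I_1 = [b+1, c_0 - 1], and I_m = [c_{m-2}+1, c_{m-1}-1] for m >= 3 odd *)
  sg_on k b.+1 (c 0 - 1) = rep ((c 0 - b - 2) %/ 4) [:: 1; 0; 0; 1] ++ [:: 1] /\
  (forall m, 3 <= m -> odd m ->
     sg_on k (c (m - 2)).+1 (c (m - 1) - 1)
     = rep ((c (m - 1) - c (m - 2) - 2) %/ 4) [:: 1; 0; 0; 1] ++ [:: 1]) /\
  (* (4) m >= 2 even *)
  (forall m, 2 <= m -> ~~ odd m ->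
     sg_on k (c (m - 2)).+1 (c (m - 1) - 1)
     = rep ((c (m - 1) - c (m - 2) - 2) %/ 4) [:: 0; 0; 1; 1] ++ [:: 0]).
Proof.
move=> sg b c; split; [split|split; [|split; [|split]]].
- exact: (SG_mark k hk4 0).
- by move=> m; apply: (SG_mark k hk4 m.+1).
- exact: (sg_on_below k hk4).
- exact: (sg_on_gap_even k hk4 0).
- move=> [|[|j]] // _ j_odd; rewrite !subSS !subn0.
  exact: (sg_on_gap_even k hk4 j.+1).
- move=> [|[|j]] // _ j_even; rewrite !subSS !subn0.
  by apply: (sg_on_gap_odd k hk4 j.+1); rewrite /= negbK in j_even.
Qed.
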